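(* Let $M,N,K$ be positive integers, let $Y_0\in\mathbb{R}^{K\times N}$, and let $f_1,\dots,f_N\ge 0$ be real numbers. Let $A\in\{0,1\}^{M\times N}$ be a matrix each of whose columns contains exactly one entry equal to $1$ (all other entries $0$). For $i=1,\dots,M$ let $C_i=\{j\in\{1,\dots,N\}: A_{ij}=1\}$, and assume that $S_i:=\sum_{k\in C_i} f_k>0$ for every $i$ (in particular every $C_i$ is nonempty). Let $\mathcal{B}$ be the set of matrices $B\in\mathbb{R}^{N\times M}$ whose columns $v_1,\dots,v_M$ satisfy $v_i[j]=0$ for all $j\notin C_i$. Define, for $B\in\mathcal{B}$, $$\Phi(B)=\sum_{j=1}^{N} f_j\,\bigl\|Y_0\,(BA-I_N)\,e_j\bigr\|_2^2 ,$$ where $e_j$ is the $j$-th standard basis vector of $\mathbb{R}^N$. Then the matrix $B^*\in\mathcal{B}$ with columns $$v_i^*[j]=\begin{cases}\dfrac{f_j}{\sum_{k\in C_i} f_k}, & j\in C_i,\\[2mm] 0, & j\notin C_i,\end{cases}\qquad i=1,\dots,M,$$ is a global minimizer of $\Phi$ over $\mathcal{B}$, i.e. $\Phi(B^* )\le \Phi(B)$ for all $B\in\mathcal{B}$.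
   Context: In the paper's notation the objective is written $Y_0((BA-I_N)\mathrm{QF})\times[f_1,\dots,f_N]^\top$, where $Y_0(X)\,\mathrm{QF}$ denotes the vector whose $j$-th entry is $\|Y_0 x_j\|_2^2$ for $x_j$ the $j$-th column of $X$; this is exactly $\Phi(B)$ above. Interpretation (not needed for the claim): $N$ experts are merged into $M$ clusters, $A$ assigns each expert to a cluster, $f_j$ is the usage frequency of expert $j$, and $B$ holds the merging weights. *)

From mathcomp Require Import all_boot all_order all_algebra.
Set Implicit Arguments. Unset Strict Implicit. Unset Printing Implicit Defensive.
Import Order.TTheory GRing.Theory Num.Theory.
Local Open Scope ring_scope.

Definition cluster {R : ringType} {M N : nat} (A : 'M[R]_(M, N)) (i : 'I_M)
  : {set 'I_N} := [set j | A i j == 1].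

Definition in_calB {R : ringType} {M N : nat} (A : 'M[R]_(M, N))
  (B : 'M[R]_(N, M)) : Prop :=
  forall (i : 'I_M) (j : 'I_N), j \notin cluster A i -> B j i = 0.

Definition sqnorm {R : ringType} {K : nat} (x : 'cV[R]_K) : R :=
  \sum_(k < K) (x k 0) ^+ 2.

Definition e_vec {R : ringType} {N : nat} (j : 'I_N) : 'cV[R]_N :=
  \col_(k < N) (if k == j then 1 else 0).

Definition Phi {R : ringType} {M N K : nat} (Y0 : 'M[R]_(K, N))
  (A : 'M[R]_(M, N)) (f : 'I_N -> R) (B : 'M[R]_(N, M)) : R :=
  \sum_(j < N) f j * sqnorm (Y0 *m (B *m A - 1%:M) *m e_vec j).

Definition Bstar {R : fieldType} {M N : nat} (A : 'M[R]_(M, N)) (f : 'I_N -> R)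
  : 'M[R]_(N, M) :=
  \matrix_(j < N, i < M)
    (if j \in cluster A i then f j / (\sum_(k in cluster A i) f k) else 0).

(* Since every column of A has a single 1, B *m A copies column c j of B into
   column j, where c j is the cluster of expert j.  Hence Phi(B) only depends on
   W := Y0 *m B, and splits, row by row and cluster by cluster, into weighted
   sums of squares  \sum_(j in C_i) f_j (W k i - Y0 k j)^2.  Each of these is
   minimised by the f-weighted mean of the Y0 k j, which is exactly the
   entry (k, i) of Y0 B^star. *)
From mathcomp Require Import all_boot all_order all_algebra.
From mathcomp Require Import ring.
Set Implicit Arguments. Unset Strict Implicit. Unset Printing Implicit Defensive.
Import Order.TTheory GRing.Theory Num.Theory.
Local Open Scope ring_scope.

Definition wmean (R : fieldType) (I : finType) (P : pred I) (w y : I -> R) : R :=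
  (\sum_(j | P j) w j * y j) / \sum_(j | P j) w j.

Lemma wmean_sq_dev_min (R : realFieldType) (I : finType) (P : pred I)
    (w y : I -> R) (x : R) :
    (forall j, 0 <= w j) -> \sum_(j | P j) w j != 0 ->
  \sum_(j | P j) w j * (wmean P w y - y j) ^+ 2
    <= \sum_(j | P j) w j * (x - y j) ^+ 2.
Proof.
move=> w_ge0 S_neq0; set m := wmean P w y.
have dev_sum0 : \sum_(j | P j) w j * (m - y j) = 0.
  under eq_bigr do rewrite mulrBr mulrC.
  by rewrite sumrB -mulr_sumr divfK // subrr.
have -> : \sum_(j | P j) w j * (x - y j) ^+ 2 =
    \sum_(j | P j) w j * (m - y j) ^+ 2 + \sum_(j | P j) w j * (x - m) ^+ 2
    + 2 * (x - m) * \sum_(j | P j) w j * (m - y j).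
  rewrite mulr_sumr -!big_split /=; apply: eq_bigr => j _; ring.
rewrite dev_sum0 mulr0 addr0 lerDl.
by apply: sumr_ge0 => j _; rewrite mulr_ge0 ?sqr_ge0.
Qed.

Lemma mulmx_e_vec (R : nzRingType) (m N : nat) (X : 'M[R]_(m, N)) j k :
  (X *m e_vec j) k 0 = X k j.
Proof.
rewrite mxE (bigD1 j) //= mxE eqxx mulr1 big1 ?addr0 // => l /negbTE ne_lj.
by rewrite mxE ne_lj mulr0.
Qed.

Lemma mulmx_assignment (R : nzRingType) (m M N : nat) (A : 'M[R]_(M, N))
    (c : 'I_N -> 'I_M) (W : 'M[R]_(m, M)) k j :
    (forall i j, A i j = (i == c j)%:R) ->
  (W *m A) k j = W k (c j).
Proof.
move=> Ac; rewrite mxE (bigD1 (c j)) //= Ac eqxx mulr1 big1 ?addr0 //.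
by move=> i /negbTE ne_i; rewrite Ac ne_i mulr0.
Qed.

Lemma assignment_of_unit_columns (R : nzRingType) (M N : nat) (A : 'M[R]_(M, N)) :
    (forall i j, A i j = 0 \/ A i j = 1) ->
    (forall j, #|[set i | A i j == 1]| = 1%N) ->
  exists c : 'I_N -> 'I_M, forall i j, A i j = (i == c j)%:R.
Proof.
move=> A01 A_col.
have /fin_all_exists [c Ac] : forall j, exists x, forall i, (A i j == 1) = (i == x).
  move=> j; have /eqP/cards1P [x Ax] := A_col j.
  by exists x => i; rewrite -in_set1 -Ax inE.
exists c => i j; rewrite -Ac.
by case: (A01 i j) => ->; rewrite ?eqxx // eq_sym oner_eq0.
Qed.

Section Assignment.

Variables (R : nzRingType) (M N K : nat) (A : 'M[R]_(M, N)) (c : 'I_N -> 'I_M).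
Hypothesis Ac : forall i j, A i j = (i == c j)%:R.

Lemma mem_cluster i j : (j \in cluster A i) = (c j == i).
Proof.
rewrite /cluster inE Ac [c j == i]eq_sym.
by case: (i == c j); [rewrite eqxx | rewrite eq_sym oner_eq0].
Qed.

Lemma Phi_assignment (Y0 : 'M[R]_(K, N)) (f : 'I_N -> R) (B : 'M[R]_(N, M)) :
  Phi Y0 A f B =
    \sum_(k < K) \sum_(i < M)
      \sum_(j in cluster A i) f j * ((Y0 *m B) k i - Y0 k j) ^+ 2.
Proof.
rewrite /Phi (eq_bigr (fun j => \sum_k f j * ((Y0 *m B) k (c j) - Y0 k j) ^+ 2)).
  rewrite exchange_big; apply: eq_bigr => k _.
  rewrite (partition_big c xpredT) //=; apply: eq_bigr => i _.
  by apply: congr_big => // [j|j /eqP <-]; rewrite ?mem_cluster.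
move=> j _; rewrite mulr_sumr; apply: eq_bigr => k _.
rewrite mulmx_e_vec mulmxBr mulmx1 mulmxA mxE (mulmx_assignment _ _ _ Ac).
by rewrite [(- Y0) k j]mxE.
Qed.

End Assignment.

Lemma mulmx_Bstar (R : fieldType) (M N K : nat) (A : 'M[R]_(M, N))
    (Y0 : 'M[R]_(K, N)) (f : 'I_N -> R) k i :
  (Y0 *m Bstar A f) k i = wmean (mem (cluster A i)) f (Y0 k).
Proof.
rewrite mxE /wmean mulr_suml [RHS]big_mkcond /=; apply: eq_bigr => j _.
rewrite mxE; case: ifP => _; last by rewrite mulr0.
by rewrite mulrCA mulrA.
Qed.

Lemma Bstar_in_calB (R : fieldType) (M N : nat) (A : 'M[R]_(M, N)) (f : 'I_N -> R) :
  in_calB A (Bstar A f).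
Proof. by move=> i j j_out; rewrite mxE (negbTE j_out). Qed.

Theorem theorem1 (R : realFieldType) (M N K : nat)
  (hM : (0 < M)%N) (hN : (0 < N)%N) (hK : (0 < K)%N)
  (Y0 : 'M[R]_(K, N)) (f : 'I_N -> R) (hf : forall j, 0 <= f j)
  (A : 'M[R]_(M, N))
  (hA01 : forall i j, A i j = 0 \/ A i j = 1)
  (hAcol : forall j : 'I_N, #|[set i : 'I_M | A i j == 1]| = 1%N)
  (hS : forall i : 'I_M, 0 < \sum_(k in cluster A i) f k) :
  in_calB A (Bstar A f) /\
  (forall B : 'M[R]_(N, M), in_calB A B -> Phi Y0 A f (Bstar A f) <= Phi Y0 A f B).
Proof.
split; first exact: Bstar_in_calB.
move=> B _; have [c Ac] := assignment_of_unit_columns hA01 hAcol.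
rewrite !(Phi_assignment Ac); apply: ler_sum => k _; apply: ler_sum => i _.
rewrite mulmx_Bstar.
exact: wmean_sq_dev_min (hf) (lt0r_neq0 (hS i)).
Qed.
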